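(* Let $m\ge2$ and $t\ge1$ be integers, and put $g_+=\gcd(m+1,2^t+1)$, $g_-=\gcd(m+1,2^t-1)$. Then the set of all $a\in\{1,2,\dots,m\}$ satisfying $f_2^t(a)=a$ equals $$\Big\{\tfrac{m+1}{g_+}\,\xi_1:\ \xi_1 \text{ odd},\ 1\le \xi_1<g_+\Big\}\ \cup\ \Big\{\tfrac{m+1}{g_-}\,\xi_2:\ \xi_2 \text{ odd},\ 1\le\xi_2<g_-\Big\}.$$
   Context: For an integer $m\ge2$, $X=\{0,1,\dots,m^2-1\}$, each element written with exactly two base-$m$ digits (leading zeros allowed), and $f(x)=D(x)-A(x)$ is the two-digit base-$m$ Kaprekar map ($D(x)$, $A(x)$: digits of $x$ in nonincreasing, resp. nondecreasing, order). The map $f_2:\{0,1,\dots,m\}\to\{0,1,\dots,m\}$ is defined by $f(a(m-1))=f_2(a)(m-1)$; explicitly $f_2(0)=0$ and $f_2(a)=|2a-m-1|$ for $1\le a\le m$. $f_2^t$ denotes the $t$-fold iterate. *)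

From mathcomp Require Import all_boot.

(* f_2 : {0,...,m} -> {0,...,m}, f_2(0) = 0, f_2(a) = |2a - m - 1| for 1 <= a <= m.
   Absolute difference of naturals written out in nat. *)
Definition f2 (m a : nat) : nat :=
  if a == 0 then 0
  else if m.+1 <= a.*2 then a.*2 - m.+1 else m.+1 - a.*2.

From mathcomp Require Import all_boot.
From mathcomp Require Import zify.

(* Put N = m + 1 and measure a point a of {0,...,m} by its
   distance b = N - a to N.  In this coordinate the map f_2 becomes the tent
   map b |-> dist2N N (2 b), where dist2N N y is the distance from y to the
   nearest multiple of 2N.  Since dist2N N (2 * dist2N N y) = dist2N N (2 y),
   the t-th iterate of the tent map is b |-> dist2N N (2^t b), so a is a
   fixed point of f_2^t iff dist2N N (2^t b) = b, i.e. iff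
   2^t b = +-b (mod 2N), i.e. iff 2N divides (2^t - 1) b or (2^t + 1) b.
   For an odd c with g = gcd(N, c), the condition 2N | c (N - a) means
   2 (N / g) | N - a, which says exactly that a = (N / g) xi with xi odd,
   1 <= xi < g. *)

Definition dist2N (N y : nat) : nat := minn (y %% (2 * N)) (2 * N - y %% (2 * N)).

Lemma dist2N_le N y : 0 < N -> dist2N N y <= N.
Proof.
move=> N_gt0; have : y %% (2 * N) < 2 * N by rewrite ltn_mod; lia.
by rewrite /dist2N; lia.
Qed.

Lemma dist2N_small N y : 0 < N -> y <= N -> dist2N N y = y.
Proof. by move=> N_gt0 yN; rewrite /dist2N modn_small; lia. Qed.

Lemma mod_eq0_small x d : x < 2 * d -> (x %% d = 0) <-> (x = 0 \/ x = d).
Proof.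
move=> xd; have [xltd | dlex] := ltnP x d; first by rewrite modn_small; lia.
have -> : x = d + (x - d) by lia.
by rewrite modnDl modn_small; lia.
Qed.

Lemma dist2N_eq N y b : 0 < N -> b <= N ->
  dist2N N y = b <-> (y = b %[mod 2 * N] \/ y + b = 0 %[mod 2 * N]).
Proof.
move=> N_gt0 bN; rewrite /dist2N -modnDml mod0n [b %% _]modn_small; last lia.
have : y %% (2 * N) < 2 * N by rewrite ltn_mod; lia.
set r := y %% (2 * N) => r_lt.
rewrite (mod_eq0_small (r + b) (2 * N)); lia.
Qed.

Lemma dist2N_mod N x y : x = y %[mod 2 * N] -> dist2N N x = dist2N N y.
Proof. by rewrite /dist2N => ->. Qed.

Lemma dist2N_opp N x y : 0 < N -> x + y = 0 %[mod 2 * N] -> dist2N N x = dist2N N y.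
Proof.
move=> N_gt0 xy; set d := dist2N N y.
have dN : d <= N by exact: dist2N_le.
apply/dist2N_eq => //.
have [yd | yd] := (dist2N_eq N y d N_gt0 dN).1 erefl.
  by right; rewrite -modnDmr -yd modnDmr.
by left; apply/eqP; rewrite -(eqn_modDl y) addnC xy yd.
Qed.

(* Doubling commutes with dist2N; this makes the tent map below iterable. *)
Lemma dist2N_double N y : 0 < N -> dist2N N (2 * dist2N N y) = dist2N N (2 * y).
Proof.
move=> N_gt0; set d := dist2N N y.
have [yd | yd] := (dist2N_eq N y d N_gt0 (dist2N_le N y N_gt0)).1 erefl.
  by apply: dist2N_mod; rewrite -[RHS]modnMmr yd modnMmr.
apply: dist2N_opp => //.
by rewrite -mulnDr -modnMmr addnC yd mod0n muln0 mod0n.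
Qed.

Lemma dist2N_fix N p b : 0 < N -> 0 < p -> b <= N ->
  dist2N N (p * b) = b <-> (2 * N %| (p - 1) * b) \/ (2 * N %| (p + 1) * b).
Proof.
move=> N_gt0 p_gt0 bN; rewrite dist2N_eq //.
have -> : (p * b = b %[mod 2 * N]) <-> (2 * N %| (p - 1) * b).
  rewrite mulnBl mul1n -eqn_mod_dvd ?leq_pmull //.
  by split => [h | /eqP h]; [apply/eqP/esym | apply/esym].
have -> : (p * b + b = 0 %[mod 2 * N]) <-> (2 * N %| (p + 1) * b).
  by rewrite mulnDl mul1n /dvdn mod0n; split => /eqP.
by [].
Qed.

(* The point N - b of {0,...,N-1} at distance b from N; b = 0 and b = N
   both give the point 0. *)
Definition point (N b : nat) : nat := (N - b) %% N.

Lemma f2_tent m b : b <= m.+1 ->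
  f2 m (point m.+1 b) = point m.+1 (dist2N m.+1 (2 * b)).
Proof.
move=> bN; rewrite /point.
have [-> | b_gt0] := posnP b; first by rewrite muln0 dist2N_small ?subn0 ?modnn.
have [-> | b_ltN] := eqVneq b m.+1.
  by rewrite subnn (dist2N_mod m.+1 _ 0) ?modnn ?mod0n ?dist2N_small ?subn0 ?modnn.
rewrite /dist2N (@modn_small (2 * b)) ?modn_small; try lia.
by rewrite /f2; case: ifP => h1; [|case: ifP => h2]; lia.
Qed.

Lemma iter_f2 m k b : b <= m.+1 ->
  iter k (f2 m) (point m.+1 b) = point m.+1 (dist2N m.+1 (2 ^ k * b)).
Proof.
move=> bN; elim: k => [|k IH]; first by rewrite expn0 mul1n dist2N_small.
by rewrite iterS IH f2_tent ?dist2N_le // dist2N_double // expnS mulnA.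
Qed.

Lemma point_inj N y b : y <= N -> 0 < b < N -> point N y = point N b -> y = b.
Proof.
move=> yN b_rng; rewrite /point [(N - b) %% N]modn_small; last lia.
have [-> | y_gt0] := posnP y; first by rewrite subn0 modnn; lia.
have [-> | y_ltN] := eqVneq y N; first by rewrite subnn mod0n; lia.
by rewrite modn_small; lia.
Qed.

Lemma fixed_point_dvd m t a : 1 <= a <= m ->
  iter t (f2 m) a = a <->
  (2 * m.+1 %| (2 ^ t).-1 * (m.+1 - a)) \/ (2 * m.+1 %| (2 ^ t).+1 * (m.+1 - a)).
Proof.
move=> a_rng; have pa : point m.+1 (m.+1 - a) = a by rewrite /point modn_small; lia.
have -> : iter t (f2 m) a = point m.+1 (dist2N m.+1 (2 ^ t * (m.+1 - a))).
  by rewrite -{1}pa iter_f2 //; lia.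
rewrite -[(2 ^ t).-1]subn1 -[(2 ^ t).+1]addn1 -dist2N_fix ?expn_gt0 //; last lia.
split => [dist_fix | ->]; last exact: pa.
by apply: point_inj; [exact: dist2N_le | lia | rewrite dist_fix pa].
Qed.

Lemma dvd_odd_mul N c x : odd c ->
  (2 * N %| c * x) = (2 * (N %/ gcdn N c) %| x).
Proof.
move=> c_odd; set g := gcdn N c.
have g_gt0 : 0 < g by rewrite gcdn_gt0 (odd_gt0 c_odd) orbT.
have N_eq : N = N %/ g * g by rewrite divnK // dvdn_gcdl.
have c_eq : c = c %/ g * g by rewrite divnK // dvdn_gcdr.
have cop : coprime (N %/ g) (c %/ g).
  by rewrite /coprime -(eqn_pmul2r g_gt0) mul1n muln_gcdl -N_eq -c_eq.
have c'_odd : odd (c %/ g) by move: c_odd; rewrite {1}c_eq oddM => /andP[].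
have -> : 2 * N = 2 * (N %/ g) * g by rewrite {1}N_eq mulnA.
have -> : c * x = c %/ g * x * g by rewrite {1}c_eq mulnAC.
rewrite dvdn_pmul2r //.
by rewrite Gauss_dvdr // coprimeMl coprime2n c'_odd.
Qed.

Lemma odd_multiples N g a : 0 < N -> g %| N -> odd g ->
  (0 < a < N /\ 2 * (N %/ g) %| N - a) <->
  exists xi, odd xi /\ 0 < xi < g /\ a = N %/ g * xi.
Proof.
move=> N_gt0 /dvdnP [q N_eq] g_odd; subst N.
rewrite mulnK; last exact: odd_gt0.
rewrite muln_gt0 in N_gt0; case/andP: N_gt0 => q_gt0 _.
have dvd_odd xi : xi <= g -> (2 * q %| q * g - q * xi) = odd xi.
  move=> xi_le; rewrite -mulnBr [2 * q]mulnC dvdn_pmul2l //.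
  by rewrite dvdn2 oddB // g_odd addTb negbK.
split => [[/andP [a_gt0 a_lt] a_dvd] | [xi [xi_odd [/andP [xi_gt0 xi_ltg] ->]]]].
  have /dvdnP [xi a_eq] : q %| a.
    rewrite -(dvdn_subr (ltnW a_lt) (dvdn_mulr g (dvdnn q))).
    exact: dvdn_trans (dvdn_mull 2 (dvdnn q)) a_dvd.
  rewrite mulnC in a_eq; subst a.
  rewrite ltn_pmul2l // in a_lt; rewrite muln_gt0 q_gt0 /= in a_gt0.
  by exists xi; rewrite -dvd_odd ?(ltnW a_lt) // a_gt0 a_lt.
by rewrite dvd_odd ?(ltnW xi_ltg) // muln_gt0 q_gt0 xi_gt0 ltn_pmul2l.
Qed.

Lemma odd_factor_fixed m c a : odd c ->
  (1 <= a <= m /\ 2 * m.+1 %| c * (m.+1 - a)) <->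
  exists xi, odd xi /\ 1 <= xi < gcdn m.+1 c /\ a = m.+1 %/ gcdn m.+1 c * xi.
Proof.
move=> c_odd; rewrite dvd_odd_mul //.
exact: odd_multiples (ltn0Sn m) (dvdn_gcdl _ _) (dvdn_odd (dvdn_gcdr _ _) c_odd).
Qed.

Theorem theorem3p3p2 (m t : nat) (hm : 2 <= m) (ht : 1 <= t) (a : nat) :
  let gp := gcdn m.+1 (2 ^ t).+1 in
  let gm := gcdn m.+1 (2 ^ t).-1 in
  (1 <= a <= m /\ iter t (f2 m) a = a) <->
  ((exists xi1 : nat, odd xi1 /\ 1 <= xi1 < gp /\ a = (m.+1 %/ gp) * xi1) \/
   (exists xi2 : nat, odd xi2 /\ 1 <= xi2 < gm /\ a = (m.+1 %/ gm) * xi2)).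
Proof.
move=> gp gm.
have pow_even : ~~ odd (2 ^ t) by rewrite oddX orbF -lt0n.
have pow_gt0 : 0 < 2 ^ t by rewrite expn_gt0.
have odd_succ : odd (2 ^ t).+1 by rewrite /= pow_even.
have odd_pred : odd (2 ^ t).-1.
  by move: pow_even; rewrite -{1}(prednK pow_gt0) /= negbK.
split => [[a_rng a_fix] | [fixed | fixed]].
- have [dvd | dvd] := (fixed_point_dvd m t a a_rng).1 a_fix.
  + by right; apply/(odd_factor_fixed m _ a odd_pred).
  + by left; apply/(odd_factor_fixed m _ a odd_succ).
- have [a_rng dvd] := (odd_factor_fixed m _ a odd_succ).2 fixed.
  by split => //; apply/(fixed_point_dvd m t a a_rng); right.
- have [a_rng dvd] := (odd_factor_fixed m _ a odd_pred).2 fixed.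
  by split => //; apply/(fixed_point_dvd m t a a_rng); left.
Qed.
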